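(* If $d$ and $e$ are degree sequences with the same sum such that $d\succeq e$, then $\Delta_{m(d)}(d)\le \Delta_{m(e)}(e)$.
   Context: Degree sequences (of finite simple graphs, terms may be $0$) are listed in nonincreasing order; sequences of different lengths are compared after padding with zeros. $m(d)=\max\{i : d_i\ge i-1\}$. For integers $k\ge 0$, $\Delta_k(d)=k(k-1)+\sum_{i>k}\min\{k,d_i\}-\sum_{i\le k}d_i$. Majorization (dominance order): for degree sequences $d,e$ with the same sum, $d\succeq e$ means $\sum_{i\le k}d_i\ge\sum_{i\le k}e_i$ for all $k$. *)

From mathcomp Require Import all_boot all_order all_algebra.
Set Implicit Arguments. Unset Strict Implicit. Unset Printing Implicit Defensive.
Import GRing.Theory Num.Theory.

(* A sequence d : seq nat stands for d_1, d_2, ..., d_(size d) followed by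
   infinitely many zeros; d_i (1-based) is nth 0 d i.-1. *)
Definition dterm (d : seq nat) (i : nat) : nat := nth 0 d i.-1.

Definition simple_graph (n : nat) (g : rel 'I_n) : Prop :=
  (forall x y, g x y = g y x) /\ (forall x, g x x = false).

Definition vdeg (n : nat) (g : rel 'I_n) (x : 'I_n) : nat :=
  #|[set y | g x y]|.

Definition degree_sequence (d : seq nat) : Prop :=
  sorted geq d /\
  exists g : rel 'I_(size d),
    simple_graph g /\ forall x : 'I_(size d), vdeg g x = nth 0 d x.

(* m(d) = max { i >= 1 : d_i >= i - 1 } (with zero padding; i = 1 always
   qualifies, and no i > size d + 1 can qualify). *)
Definition mdeg (d : seq nat) : nat :=
  \max_(1 <= i < (size d).+2 | i.-1 <= dterm d i) i.

Definition Delta (k : nat) (d : seq nat) : int :=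
  ((k * k.-1)%:Z + (\sum_(k.+1 <= i < (size d).+1) minn k (dterm d i))%:Z
   - (\sum_(1 <= i < k.+1) dterm d i)%:Z)%R.

Definition majorizes (d e : seq nat) : Prop :=
  sumn d = sumn e /\
  forall k : nat, \sum_(1 <= i < k.+1) dterm e i <= \sum_(1 <= i < k.+1) dterm d i.

From mathcomp Require Import all_boot all_order all_algebra.
From mathcomp Require Import zify.
Import Order.TTheory GRing.Theory Num.Theory.

(* Write P_k(d) = d_1 + ... + d_k and S = sum of d, and put
     defect_d(k) = k(k-1) - 2 P_k(d)   (an integer).
   Its increments are defect_d(k+1) - defect_d(k) = 2k - 2 d_(k+1).  For a
   nonincreasing d we have d_(k+1) >= k exactly while k+1 <= m(d), so
   defect_d decreases up to m(d) and increases afterwards: m(d) minimises it.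
   Moreover every term d_i with i > m(d) is below m(d), so the truncations
   min(m(d), d_i) in Delta are harmless and Delta_(m(d))(d) = S + defect_d(m(d)).
   With k = m(e), majorization P_k(e) <= P_k(d) gives
     Delta_(m(d))(d) = S + defect_d(m(d)) <= S + defect_d(k)
                     <= S + defect_e(k) = Delta_(m(e))(e). *)

Lemma dterm_nonincr {d : seq nat} {i j : nat} :
  sorted geq d -> i <= j -> dterm d j <= dterm d i.
Proof.
move=> sd le_ij; rewrite /dterm.
have [lt_j|ge_j] := ltnP j.-1 (size d); last by rewrite nth_default.
have geq_trans : transitive geq.
  by move=> y x z /= le_yx le_zy; exact: leq_trans le_zy le_yx.
apply: (sorted_leq_nth geq_trans (fun x => leqnn x)) => //; rewrite ?inE; lia.
Qed.

Definition psum (d : seq nat) (k : nat) : nat := \sum_(1 <= i < k.+1) dterm d i.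

Lemma psumS (d : seq nat) (k : nat) : psum d k.+1 = psum d k + dterm d k.+1.
Proof. by rewrite /psum big_nat_recr. Qed.

Lemma psum_size (d : seq nat) : psum d (size d) = sumn d.
Proof. by rewrite /psum big_add1 sumnE [RHS](big_nth 0). Qed.

Lemma psum_split (d : seq nat) (a b : nat) : a <= b ->
  psum d b = psum d a + \sum_(a.+1 <= i < b.+1) dterm d i.
Proof. by move=> le_ab; rewrite /psum -big_cat_nat //; lia. Qed.

Lemma mdeg_ub (d : seq nat) : mdeg d <= (size d).+1.
Proof. by apply/bigmax_leqP_seq => i; rewrite mem_index_iota; lia. Qed.

Lemma mdeg_max (d : seq nat) (i : nat) :
  0 < i <= (size d).+1 -> i.-1 <= dterm d i -> i <= mdeg d.
Proof.
move=> range_i good_i; rewrite /mdeg.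
by apply: (leq_bigmax_seq (F := id)) => //; rewrite mem_index_iota; lia.
Qed.

Lemma mdeg_attained (d : seq nat) : 0 < mdeg d /\ (mdeg d).-1 <= dterm d (mdeg d).
Proof.
have pos_m : 0 < mdeg d by apply: mdeg_max; rewrite ?ltnS.
split=> //; move: pos_m; rewrite /mdeg big_nat_cond.
elim/big_ind: _ => // [m n good_m good_n|i /andP[_ ->] //].
by rewrite /maxn; case: ifP.
Qed.

Lemma dterm_head {d : seq nat} (k : nat) :
  sorted geq d -> 0 < k <= mdeg d -> k.-1 <= dterm d k.
Proof.
move=> sd /andP[_ le_km]; have [_ good_m] := mdeg_attained d.
have := dterm_nonincr sd le_km; lia.
Qed.

Lemma dterm_tail {d : seq nat} {k : nat} : mdeg d < k -> dterm d k < k.-1.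
Proof.
move=> lt_mk; have pos_k : 0 < k by lia.
have [le_k|gt_k] := leqP k (size d).+1; last by rewrite /dterm nth_default; lia.
rewrite ltnNge; apply: contraTN lt_mk => good_k; rewrite -leqNgt.
by apply: mdeg_max; rewrite ?pos_k.
Qed.

(* defect_d(k) = k(k-1) - 2 P_k(d): Delta_k(d) minus the total sum, as long
   as no term after position k exceeds k. *)
Definition defect (d : seq nat) (k : nat) : int :=
  ((k * k.-1)%:Z - (2 * psum d k)%:Z)%R.

Lemma defectS (d : seq nat) (k : nat) :
  defect d k.+1 = (defect d k + (2 * k)%:Z - (2 * dterm d k.+1)%:Z)%R.
Proof. rewrite /defect psumS; case: k => [|k] /=; lia. Qed.

(* For sorted d the defect attains its minimum at k = m(d): it is
   nonincreasing on [0, m(d)] and nondecreasing from m(d) on. *)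
Lemma defect_min {d : seq nat} (k : nat) :
  sorted geq d -> (defect d (mdeg d) <= defect d k)%R.
Proof.
move=> sd; have [le_mk|lt_km] := leqP (mdeg d) k.
  have incr : {in [pred i | mdeg d <= i] &,
                {homo defect d : i j / i <= j >-> (i <= j)%R}}.
    apply: homo_leq_in => [x|y x z|i j /= le_mi _ l /andP[lt_il _]|i le_mi _].
    - exact: lexx.
    - exact: le_trans.
    - by rewrite !inE in le_mi *; lia.
    - rewrite inE /= in le_mi.
      by rewrite defectS; have := @dterm_tail d i.+1; lia.
  by apply: incr; rewrite ?inE.
have decr : {in [pred i | i <= mdeg d] &,
              {homo defect d : i j / i <= j >-> (j <= i)%R}}.
  apply: homo_leq_in => [x|y x z le_yx le_zy|i j /= _ le_jm l /andP[_ lt_lj]|i _ /= lt_im].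
  - exact: lexx.
  - exact: le_trans le_zy le_yx.
  - by rewrite !inE in le_jm *; lia.
  - rewrite inE /= in lt_im.
    by rewrite defectS; have := dterm_head i.+1 sd; lia.
by apply: decr; rewrite ?inE // ltnW.
Qed.

(* All terms after position m(d) are below m(d), so the truncated tail of
   Delta_(m(d))(d) is the plain tail, and together with P_(m(d))(d) it adds
   up to the total sum. *)
Lemma psum_mdeg_tail {d : seq nat} : sorted geq d ->
  \sum_((mdeg d).+1 <= i < (size d).+1) minn (mdeg d) (dterm d i)
  + psum d (mdeg d) = sumn d.
Proof.
move=> sd; set m := mdeg d.
have tail_small : forall i, m < i -> dterm d i <= m.
  move=> i lt_mi; have := dterm_nonincr sd lt_mi.
  have := @dterm_tail d m.+1 (ltnSn m); lia.
rewrite (eq_big_nat _ _ (F2 := dterm d)); last first.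
  by move=> i /andP[lt_mi _]; apply/minn_idPr; exact: tail_small.
have [le_m_size|lt_size_m] := leqP m (size d).
  by rewrite addnC -psum_split // psum_size.
have -> : m = (size d).+1 by have := mdeg_ub d; rewrite -/m; lia.
by rewrite big_geq // psumS psum_size /dterm nth_default ?addn0.
Qed.

Lemma Delta_mdeg {d : seq nat} : sorted geq d ->
  Delta (mdeg d) d = ((sumn d)%:Z + defect d (mdeg d))%R.
Proof.
move=> sd; rewrite /Delta /defect -(psum_mdeg_tail sd) -/(psum d (mdeg d)).
lia.
Qed.

Lemma defect_le_psum (d e : seq nat) (k : nat) :
  psum e k <= psum d k -> (defect d k <= defect e k)%R.
Proof. rewrite /defect; lia. Qed.

Theorem lemma15 (d e : seq nat) :
  degree_sequence d -> degree_sequence e ->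
  sumn d = sumn e -> majorizes d e ->
  (Delta (mdeg d) d <= Delta (mdeg e) e)%R.
Proof.
move=> [sd _] [se _] same_sum [_ dominates].
rewrite (Delta_mdeg sd) (Delta_mdeg se) same_sum lerD2l.
apply: le_trans (defect_min (mdeg e) sd) _.
exact: defect_le_psum (dominates (mdeg e)).
Qed.
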